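(* Let $\mathbb{X},\mathbb{Y}$ be real normed linear spaces and let $T\in\mathbb{B}(\mathbb{X},\mathbb{Y})$, $T\neq 0$. Then the following are equivalent: (i) $T$ is a smooth point of $\mathbb{B}(\mathbb{X},\mathbb{Y})$ (with the operator norm). (ii) For every $A\in\mathbb{B}(\mathbb{X},\mathbb{Y})$: $T\perp_B A$ if and only if for every semi-inner-product $[\cdot,\cdot]$ on $\mathbb{Y}$ compatible with the norm and every norming sequence $\{x_n\}$ for $T$, every subsequential limit of the real sequence $\{[Ax_n,Tx_n]\}$ equals $0$. *)

From Stdlib Require Import Reals Lra ClassicalEpsilon.
Open Scope R_scope.

Record NormedSpace : Type := MkNormedSpace {
  ns_car :> Type;
  ns_zero : ns_car;
  ns_add : ns_car -> ns_car -> ns_car;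
  ns_opp : ns_car -> ns_car;
  ns_scal : R -> ns_car -> ns_car;
  ns_norm : ns_car -> R;
  ns_addA : forall x y z, ns_add x (ns_add y z) = ns_add (ns_add x y) z;
  ns_addC : forall x y, ns_add x y = ns_add y x;
  ns_add0 : forall x, ns_add x ns_zero = x;
  ns_addN : forall x, ns_add x (ns_opp x) = ns_zero;
  ns_scalA : forall a b x, ns_scal a (ns_scal b x) = ns_scal (a * b) x;
  ns_scal1 : forall x, ns_scal 1 x = x;
  ns_scalDv : forall a x y, ns_scal a (ns_add x y) = ns_add (ns_scal a x) (ns_scal a y);
  ns_scalDs : forall a b x, ns_scal (a + b) x = ns_add (ns_scal a x) (ns_scal b x);
  ns_norm_eq0 : forall x, ns_norm x = 0 -> x = ns_zero;
  ns_normZ : forall a x, ns_norm (ns_scal a x) = Rabs a * ns_norm x;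
  ns_normD : forall x y, ns_norm (ns_add x y) <= ns_norm x + ns_norm y
}.

Arguments ns_zero {_}.
Arguments ns_add {_} _ _.
Arguments ns_opp {_} _.
Arguments ns_scal {_} _ _.
Arguments ns_norm {_} _.

Section Operators.
Variables X Y : NormedSpace.

Definition bounded_linear (T : X -> Y) : Prop :=
  (forall x y, T (ns_add x y) = ns_add (T x) (T y)) /\
  (forall a x, T (ns_scal a x) = ns_scal a (T x)) /\
  (exists M, forall x, ns_norm (T x) <= M * ns_norm x).

(* Operator norm: sup { ||T x|| : ||x|| <= 1 } (0 if the sup does not exist,
   which never happens for bounded T). *)
Definition opnorm (T : X -> Y) : R :=
  let E := fun r => exists x : X, ns_norm x <= 1 /\ r = ns_norm (T x) in
  match excluded_middle_informative (exists m, is_lub E m) with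
  | left H => proj1_sig (constructive_indefinite_description _ H)
  | right _ => 0
  end.

Definition op_add (T A : X -> Y) : X -> Y := fun x => ns_add (T x) (A x).
Definition op_scal (l : R) (A : X -> Y) : X -> Y := fun x => ns_scal l (A x).
Definition op_zero : X -> Y := fun _ => ns_zero.

Definition BJ_orth (T A : X -> Y) : Prop :=
  forall l : R, opnorm T <= opnorm (op_add T (op_scal l A)).

(* Bounded linear functionals on B(X,Y) (functionals are only relevant on
   bounded linear operators). f has norm <= 1 on B(X,Y). *)
Definition support_functional (T : X -> Y) (f : (X -> Y) -> R) : Prop :=
  (forall A B, bounded_linear A -> bounded_linear B ->
     f (op_add A B) = f A + f B) /\
  (forall a A, bounded_linear A -> f (op_scal a A) = a * f A) /\
  (forall A, bounded_linear A -> Rabs (f A) <= opnorm A) /\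
  f T = opnorm T.

Definition smooth_point (T : X -> Y) : Prop :=
  (exists f, support_functional T f) /\
  (forall f g, support_functional T f -> support_functional T g ->
     forall A, bounded_linear A -> f A = g A).

Definition norming_sequence (T : X -> Y) (xs : nat -> X) : Prop :=
  (forall n, ns_norm (xs n) = 1) /\
  Un_cv (fun n => ns_norm (T (xs n))) (opnorm T).

End Operators.

Definition compatible_sip (Y : NormedSpace) (s : Y -> Y -> R) : Prop :=
  (forall a x y z, s (ns_add (ns_scal a x) y) z = a * s x z + s y z) /\
  (forall x, x <> ns_zero -> 0 < s x x) /\
  (forall x y, (s x y) ^ 2 <= s x x * s y y) /\
  (forall a x y, s x (ns_scal a y) = a * s x y) /\
  (forall x, s x x = (ns_norm x) ^ 2).

Definition subseq_limit (u : nat -> R) (L : R) : Prop :=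
  exists phi : nat -> nat, (forall n, (phi n < phi (S n))%nat) /\
    Un_cv (fun n => u (phi n)) L.

From Stdlib Require Import Reals Lra Lia ClassicalEpsilon Classical FunctionalExtensionality PropExtensionality.
From mathcomp Require boolp classical_sets.
Open Scope R_scope.

(* A Birkhoff-James orthogonal direction A at T carries a support functional
   vanishing at A (Hahn-Banach applied to the distance to the line through A),
   while a limit L of [A x_n, T x_n] along a norming sequence equals ||T|| times
   the value at A of the support functional built from B |-> limsup [B x_n, T x_n].
   At a smooth point these functionals coincide, so L = 0.  Conversely, vanishing
   limits give ||T||^2 <= ||T + l A|| ||T|| by passing to the limit in
   [(T + l A) x_n, T x_n] <= ||T + l A|| ||T x_n||.  Finally condition (ii) is
   additive in A, so orthogonality to T becomes additive, and additivity forces a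
   unique support functional.  Hahn-Banach itself comes from Zorn's lemma: a
   minimal sublinear functional is linear. *)

(** * Infima *)

Definition has_inf (F : R -> Prop) : Prop :=
  (exists x, F x) /\ (exists b, forall x, F x -> b <= x).

(* Minus the supremum of [-F]; a junk value (0) when [F] has no infimum. *)
Definition Rinf (F : R -> Prop) : R :=
  match excluded_middle_informative (exists m, is_lub (fun r => F (- r)) m) with
  | left H => - proj1_sig (constructive_indefinite_description _ H)
  | right _ => 0
  end.

Lemma Rinf_is_glb F : has_inf F ->
  (forall x, F x -> Rinf F <= x) /\ (forall c, (forall x, F x -> c <= x) -> c <= Rinf F).
Proof.
  intros [[x0 Hx0] [b Hb]].
  assert (Hex : exists m, is_lub (fun r => F (- r)) m).
  { destruct (completeness (fun r => F (- r))) as [m Hm].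
    - exists (- b). intros r Hr. specialize (Hb _ Hr). lra.
    - exists (- x0). now rewrite Ropp_involutive.
    - now exists m. }
  unfold Rinf. destruct (excluded_middle_informative _) as [H|H]; [|contradiction].
  destruct (constructive_indefinite_description _ H) as [m [Hub Hleast]]; simpl.
  split.
  - intros x Hx. assert (- x <= m) by (apply Hub; now rewrite Ropp_involutive). lra.
  - intros c Hc. assert (m <= - c). { apply Hleast. intros r Hr. specialize (Hc _ Hr). lra. }
    lra.
Qed.

Lemma Rinf_lb F x : has_inf F -> F x -> Rinf F <= x.
Proof. intros HF. now apply Rinf_is_glb. Qed.

Lemma Rinf_glb F c : has_inf F -> (forall x, F x -> c <= x) -> c <= Rinf F.
Proof. intros HF. now apply Rinf_is_glb. Qed.

Lemma Rinf_add_ge F1 F2 a : has_inf F1 -> has_inf F2 ->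
  (forall x y, F1 x -> F2 y -> a <= x + y) -> a <= Rinf F1 + Rinf F2.
Proof.
  intros H1 H2 H.
  assert (H1' : forall y, F2 y -> a - y <= Rinf F1).
  { intros y Hy. apply Rinf_glb; auto. intros x Hx. specialize (H x y Hx Hy). lra. }
  assert (a - Rinf F1 <= Rinf F2).
  { apply Rinf_glb; auto. intros y Hy. specialize (H1' y Hy). lra. }
  lra.
Qed.

Lemma Rinf_scal F G c : 0 < c -> has_inf F ->
  (forall x, F x -> G (c * x)) -> (forall y, G y -> F (y / c)) ->
  Rinf G = c * Rinf F.
Proof.
  intros Hc HF HFG HGF.
  assert (Hdiv : forall y, y = c * (y / c)) by (intros; field; lra).
  assert (HG : has_inf G).
  { destruct HF as [[x Hx] [b Hb]]. split; [exists (c * x); auto|].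
    exists (c * b). intros y Hy. rewrite (Hdiv y).
    apply Rmult_le_compat_l; [lra|]. auto. }
  apply Rle_antisym.
  - assert (Rinf G / c <= Rinf F).
    { apply Rinf_glb; auto. intros x Hx. rewrite <- (Rmult_div_r c x) by lra.
      unfold Rdiv. apply Rmult_le_compat_r; [left; now apply Rinv_0_lt_compat|].
      apply Rinf_lb; auto. }
    rewrite (Hdiv (Rinf G)). apply Rmult_le_compat_l; lra.
  - apply Rinf_glb; auto. intros y Hy. rewrite (Hdiv y).
    apply Rmult_le_compat_l; [lra|]. apply Rinf_lb; auto.
Qed.

Lemma zorn_preorder (T : Type) (t0 : T) (Rl : T -> T -> Prop) :
  (forall t, Rl t t) -> (forall r s t, Rl r s -> Rl s t -> Rl r t) ->
  (forall A : T -> Prop, (forall s t, A s -> A t -> Rl s t \/ Rl t s) ->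
     exists t, forall s, A s -> Rl s t) ->
  exists t, forall s, Rl t s -> Rl s t.
Proof.
  intros Hrefl Htrans Hchain.
  destruct (@classical_sets.ZL_preorder T t0 (fun a b => boolp.asbool (Rl a b))) as [t Ht].
  - intros t. now apply boolp.asboolT.
  - intros r s t Hrs Hst. apply boolp.asboolT.
    apply boolp.asboolW in Hrs, Hst. eauto.
  - intros A HA. destruct (Hchain A) as [t Ht].
    + intros s t Hs Ht. destruct (HA s t Hs Ht) as [H|H]; [left|right]; now apply boolp.asboolW.
    + exists t. intros s Hs. apply boolp.asboolT. auto.
  - exists t. intros s Hs. now apply boolp.asboolW, Ht, boolp.asboolT.
Qed.

(** * Hahn-Banach *)

Record VectorSpace := MkVectorSpace {
  vcar :> Type;
  vzero : vcar;
  vadd : vcar -> vcar -> vcar;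
  vscal : R -> vcar -> vcar;
  vaddA : forall x y z, vadd x (vadd y z) = vadd (vadd x y) z;
  vaddC : forall x y, vadd x y = vadd y x;
  vadd0 : forall x, vadd x vzero = x;
  vscal0 : forall x, vscal 0 x = vzero;
  vscalA : forall a b x, vscal a (vscal b x) = vscal (a * b) x;
  vscal1 : forall x, vscal 1 x = x;
  vscalDv : forall a x y, vscal a (vadd x y) = vadd (vscal a x) (vscal a y);
  vscalDs : forall a b x, vscal (a + b) x = vadd (vscal a x) (vscal b x)
}.
Arguments vzero {_}. Arguments vadd {_} _ _. Arguments vscal {_} _ _.

Section VectorIdentities.
Variable V : VectorSpace.

Lemma vadd0l (x : V) : vadd vzero x = x.
Proof. now rewrite vaddC, vadd0. Qed.

Lemma vscal_addNr a (v : V) : vadd (vscal a v) (vscal (- a) v) = vzero.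
Proof. now rewrite <- vscalDs, Rplus_opp_r, vscal0. Qed.

Lemma vaddNr (u : V) : vadd u (vscal (-1) u) = vzero.
Proof. rewrite <- (vscal1 _ u) at 1. apply vscal_addNr. Qed.

Lemma vaddK (u v : V) : vadd (vadd u v) (vscal (-1) v) = u.
Proof. now rewrite <- vaddA, vaddNr, vadd0. Qed.

Lemma vaddKl (u v : V) : vadd (vadd u v) (vscal (-1) u) = v.
Proof. rewrite (vaddC _ u). apply vaddK. Qed.

Lemma vaddACA (a b c d : V) : vadd (vadd a b) (vadd c d) = vadd (vadd a c) (vadd b d).
Proof. rewrite <- !vaddA. f_equal. rewrite !vaddA. f_equal. apply vaddC. Qed.

Lemma vadd_combine (u v : V) a b :
  vadd (vadd u (vscal a v)) (vadd (vscal (-1) u) (vscal b v)) = vscal (a + b) v.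
Proof. now rewrite vaddACA, vaddNr, vadd0l, vscalDs. Qed.

End VectorIdentities.

Section HahnBanach.
Variable V : VectorSpace.
Variable D : V -> Prop.
Hypothesis D0 : D vzero.
Hypothesis Dadd : forall u v, D u -> D v -> D (vadd u v).
Hypothesis Dscal : forall c u, D u -> D (vscal c u).

Definition sublinear (p : V -> R) : Prop :=
  (forall u v, D u -> D v -> p (vadd u v) <= p u + p v) /\
  (forall c u, 0 < c -> D u -> p (vscal c u) = c * p u) /\
  p vzero = 0.

Definition linear_on (f : V -> R) : Prop :=
  (forall u v, D u -> D v -> f (vadd u v) = f u + f v) /\
  (forall c u, D u -> f (vscal c u) = c * f u).

Lemma sublinear_nonneg_homogeneous p c u : sublinear p -> 0 <= c -> D u ->
  p (vscal c u) = c * p u.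
Proof.
  intros [_ [Hhom Hzero]] Hc Hu. destruct (Rle_lt_or_eq_dec _ _ Hc) as [Hc'|<-]; auto.
  now rewrite vscal0, Hzero, Rmult_0_l.
Qed.

Lemma sublinear_opp_ge p u : sublinear p -> D u -> - p (vscal (-1) u) <= p u.
Proof.
  intros [Hadd [_ Hzero]] Hu. pose proof (Hadd u (vscal (-1) u) Hu (Dscal _ _ Hu)) as H.
  rewrite vaddNr, Hzero in H. lra.
Qed.

Lemma sublinear_line_ge p v c t : sublinear p -> D v -> - p (vscal (-1) v) <= c <= p v ->
  t * c <= p (vscal t v).
Proof.
  intros Hp Hv Hc. destruct (Rle_or_lt 0 t) as [Ht|Ht].
  - rewrite sublinear_nonneg_homogeneous by auto. apply Rmult_le_compat_l; lra.
  - replace (vscal t v) with (vscal (- t) (vscal (-1) v)) by (rewrite vscalA; f_equal; ring).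
    rewrite sublinear_nonneg_homogeneous by (auto; lra). nra.
Qed.

(* Lowering [p] along the line through [v], so that every linear functional
   below [shift p v c] takes the value [c] at [v]. *)
Definition shift (p : V -> R) (v : V) (c : R) (u : V) : R :=
  Rinf (fun r => exists t, r = p (vadd u (vscal t v)) - t * c).

Section Shift.
Variables (p : V -> R) (v : V) (c : R).
Hypothesis Hp : sublinear p.
Hypothesis Hv : D v.
Hypothesis Hc : - p (vscal (-1) v) <= c <= p v.

Lemma shift_has_inf u : D u -> has_inf (fun r => exists t, r = p (vadd u (vscal t v)) - t * c).
Proof.
  intros Hu. split; [now exists (p (vadd u (vscal 0 v)) - 0 * c), 0|].
  exists (- p (vscal (-1) u)). intros r [t ->].
  pose proof (proj1 Hp _ _ (Dadd _ _ Hu (Dscal t _ Hv)) (Dscal (-1) _ Hu)) as H.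
  rewrite vaddKl in H. pose proof (sublinear_line_ge p v c t Hp Hv Hc). lra.
Qed.

Lemma shift_le u t : D u -> shift p v c u <= p (vadd u (vscal t v)) - t * c.
Proof. intros Hu. apply Rinf_lb; [now apply shift_has_inf|eauto]. Qed.

Lemma shift_le_self u : D u -> shift p v c u <= p u.
Proof.
  intros Hu. pose proof (shift_le u 0 Hu) as H. now rewrite vscal0, vadd0, Rmult_0_l, Rminus_0_r in H.
Qed.

Lemma shift_line_le a : shift p v c (vscal a v) <= a * c.
Proof.
  pose proof (shift_le (vscal a v) (- a) (Dscal _ _ Hv)) as H.
  rewrite vscal_addNr, (proj2 (proj2 Hp)) in H. lra.
Qed.

Lemma shift_sublinear : sublinear (shift p v c).
Proof.
  destruct Hp as [Hadd [Hhom Hzero]]. split; [|split].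
  - intros u1 u2 Hu1 Hu2. apply Rinf_add_ge; try now apply shift_has_inf.
    intros x y [t1 ->] [t2 ->].
    eapply Rle_trans; [apply (shift_le _ (t1 + t2)); auto|].
    rewrite vscalDs, vaddACA.
    pose proof (Hadd _ _ (Dadd _ _ Hu1 (Dscal t1 _ Hv)) (Dadd _ _ Hu2 (Dscal t2 _ Hv))). lra.
  - intros a u Ha Hu. apply Rinf_scal; auto; [now apply shift_has_inf|..].
    + intros x [t ->]. exists (a * t).
      rewrite <- vscalA, <- vscalDv, Hhom by auto. ring.
    + intros y [t ->]. exists (t / a).
      replace (vadd (vscal a u) (vscal t v)) with (vscal a (vadd u (vscal (t / a) v)))
        by (rewrite vscalDv, vscalA; do 3 f_equal; field; lra).
      rewrite Hhom by auto. field. lra.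
  - apply Rle_antisym.
    + pose proof (shift_le_self vzero D0). lra.
    + apply Rinf_glb; [now apply shift_has_inf|]. intros r [t ->].
      rewrite vadd0l. pose proof (sublinear_line_ge p v c t Hp Hv Hc). lra.
Qed.

End Shift.

Lemma sublinear_minimal_linear q : sublinear q ->
  (forall q', sublinear q' -> (forall u, D u -> q' u <= q u) -> forall u, D u -> q u <= q' u) ->
  linear_on q.
Proof.
  intros Hq Hmin.
  (* Minimality against [shift q v (q v)] forces [q (-v) <= - q v]. *)
  assert (Hodd : forall v, D v -> q (vscal (-1) v) = - q v).
  { intros v Hv.
    assert (Hc : - q (vscal (-1) v) <= q v <= q v) by (split; [now apply sublinear_opp_ge|lra]).
    pose proof (Hmin _ (shift_sublinear q v _ Hq Hv Hc) (fun u => shift_le_self q v _ Hq Hv Hc u)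
                  (vscal (-1) v) (Dscal _ _ Hv)) as H.
    pose proof (shift_line_le q v _ Hq Hv Hc (-1)). pose proof (sublinear_opp_ge q v Hq Hv). lra. }
  destruct Hq as [Hadd [Hhom Hzero]]. split.
  - intros u v Hu Hv. apply Rle_antisym; auto.
    pose proof (Hadd (vadd u v) (vscal (-1) v) (Dadd _ _ Hu Hv) (Dscal _ _ Hv)) as H.
    rewrite vaddK, Hodd in H; auto. lra.
  - intros c u Hu. destruct (Rtotal_order c 0) as [Hneg|[->|Hpos]]; auto.
    + replace (vscal c u) with (vscal (- c) (vscal (-1) u)) by (rewrite vscalA; f_equal; ring).
      rewrite Hhom, Hodd by (auto; lra). ring.
    + now rewrite vscal0, Hzero, Rmult_0_l.
Qed.

Section ChainInfimum.
Variable p : V -> R.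
Variable A : (V -> R) -> Prop.
Variable q0 : V -> R.
Hypothesis Aq0 : A q0.
Hypothesis A_below : forall q, A q -> sublinear q /\ forall u, D u -> q u <= p u.
Hypothesis A_chain : forall q q', A q -> A q' ->
  (forall u, D u -> q u <= q' u) \/ (forall u, D u -> q' u <= q u).

Let values u : R -> Prop := fun r => exists q, A q /\ r = q u.

Lemma chain_values_has_inf u : D u -> has_inf (values u).
Proof.
  intros Hu. split; [exists (q0 u); now exists q0|].
  exists (- p (vscal (-1) u)). intros r [q [Hq ->]]. destruct (A_below q Hq) as [Hsub Hle].
  pose proof (sublinear_opp_ge q u Hsub Hu). pose proof (Hle _ (Dscal (-1) _ Hu)). lra.
Qed.

Lemma chain_inf_lower_bound q u : A q -> D u -> Rinf (values u) <= q u.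
Proof. intros Hq Hu. apply Rinf_lb; [now apply chain_values_has_inf|]. now exists q. Qed.

Lemma chain_inf_sublinear : sublinear (fun u => Rinf (values u)).
Proof.
  split; [|split].
  - intros u v Hu Hv. apply Rinf_add_ge; try now apply chain_values_has_inf.
    intros x y [q [Hq ->]] [q' [Hq' ->]].
    destruct (A_chain q q' Hq Hq') as [Hle|Hle].
    + pose proof (chain_inf_lower_bound q (vadd u v) Hq (Dadd _ _ Hu Hv)).
      pose proof (proj1 (proj1 (A_below q Hq)) u v Hu Hv). pose proof (Hle v Hv). lra.
    + pose proof (chain_inf_lower_bound q' (vadd u v) Hq' (Dadd _ _ Hu Hv)).
      pose proof (proj1 (proj1 (A_below q' Hq')) u v Hu Hv). pose proof (Hle u Hu). lra.
  - intros c u Hc Hu. apply Rinf_scal; auto; [now apply chain_values_has_inf|..].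
    + intros x [q [Hq ->]]. exists q. split; auto.
      symmetry. apply (proj1 (proj2 (proj1 (A_below q Hq)))); auto.
    + intros y [q [Hq ->]]. exists q. split; auto.
      rewrite (proj1 (proj2 (proj1 (A_below q Hq)))) by auto. field. lra.
  - apply Rle_antisym.
    + apply Rinf_lb; [now apply chain_values_has_inf|]. exists q0. split; auto.
      symmetry. apply (proj2 (proj2 (proj1 (A_below q0 Aq0)))).
    + apply Rinf_glb; [now apply chain_values_has_inf|]. intros r [q [Hq ->]].
      rewrite (proj2 (proj2 (proj1 (A_below q Hq)))). lra.
Qed.

Lemma chain_inf_le u : D u -> Rinf (values u) <= p u.
Proof.
  intros Hu. apply Rle_trans with (q0 u).
  - apply Rinf_lb; [now apply chain_values_has_inf|]. now exists q0.
  - now apply A_below.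
Qed.

End ChainInfimum.

Lemma linear_below_sublinear p : sublinear p ->
  exists f, linear_on f /\ forall u, D u -> f u <= p u.
Proof.
  intros Hp.
  set (Below := {q : V -> R | sublinear q /\ forall u, D u -> q u <= p u}).
  set (above := fun a b : Below => forall u, D u -> proj1_sig b u <= proj1_sig a u).
  assert (p_below : Below) by (exists p; split; auto; intros; lra).
  destruct (zorn_preorder Below p_below above) as [[q [Hq Hqp]] Hmax].
  - intros t u _. lra.
  - intros r s t H1 H2 u Hu. specialize (H1 u Hu). specialize (H2 u Hu). lra.
  - intros C HC. destruct (classic (exists c, C c)) as [[[q0 Hq0] Cq0]|Hempty].
    2:{ exists p_below. intros s Cs. exfalso. eauto. }
    set (Aset := fun q => exists c : Below, C c /\ q = proj1_sig c).
    assert (HA : forall q, Aset q -> sublinear q /\ forall u, D u -> q u <= p u)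
      by (intros q [c [_ ->]]; apply (proj2_sig c)).
    assert (Hchain : forall q q', Aset q -> Aset q' ->
      (forall u, D u -> q u <= q' u) \/ (forall u, D u -> q' u <= q u)).
    { intros q q' [c [Cc ->]] [c' [Cc' ->]]. destruct (HC c c' Cc Cc'); auto. }
    assert (Aq0 : Aset q0) by (exists (exist _ q0 Hq0); auto).
    exists (exist _ (fun u => Rinf (fun r => exists q, Aset q /\ r = q u)) (conj (chain_inf_sublinear p Aset q0 Aq0 HA Hchain)
                             (chain_inf_le p Aset q0 Aq0 HA))).
    intros c Cc u Hu. apply (chain_inf_lower_bound p Aset q0 Aq0 HA); auto. now exists c.
  - exists q. split; auto. apply sublinear_minimal_linear; auto.
    intros q' Hq' Hle. apply (Hmax (exist _ q' (conj Hq' (fun u Hu => Rle_trans _ _ _ (Hle u Hu) (Hqp u Hu))))).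
    exact Hle.
Qed.

Theorem hahn_banach p y : sublinear p -> D y ->
  exists f, linear_on f /\ (forall u, D u -> f u <= p u) /\ f y = p y.
Proof.
  intros Hp Hy.
  assert (Hc : - p (vscal (-1) y) <= p y <= p y) by (split; [now apply sublinear_opp_ge|lra]).
  destruct (linear_below_sublinear _ (shift_sublinear p y _ Hp Hy Hc)) as [f [Hf Hle]].
  exists f. split; auto. split.
  - intros u Hu. apply Rle_trans with (shift p y (p y) u); [|apply shift_le_self]; auto.
  - pose proof (Hle _ Hy) as H1. pose proof (shift_line_le p y _ Hp Hy Hc 1) as H2.
    rewrite vscal1 in H2.
    pose proof (Hle _ (Dscal (-1) _ Hy)) as H3. pose proof (shift_line_le p y _ Hp Hy Hc (-1)) as H4.
    rewrite (proj2 Hf) in H3 by auto. lra.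
Qed.

End HahnBanach.

(** * Normed spaces and bounded operators *)

Section NormedSpaceFacts.
Variable Y : NormedSpace.

Lemma ns_scal0 (x : Y) : ns_scal 0 x = ns_zero.
Proof.
  set (z := ns_scal 0 x).
  assert (Hz : ns_add z z = z) by (unfold z; rewrite <- ns_scalDs; f_equal; ring).
  rewrite <- (ns_addN _ z). rewrite <- Hz at 2. now rewrite <- ns_addA, ns_addN, ns_add0.
Qed.

Lemma ns_scal_zero a : ns_scal a (@ns_zero Y) = ns_zero.
Proof. now rewrite <- (ns_scal0 ns_zero), ns_scalA, Rmult_0_r. Qed.

Definition ns_vector_space : VectorSpace :=
  MkVectorSpace Y ns_zero ns_add ns_scal (ns_addA Y) (ns_addC Y) (ns_add0 Y)
    ns_scal0 (ns_scalA Y) (ns_scal1 Y) (ns_scalDv Y) (ns_scalDs Y).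

Lemma norm_zero : ns_norm (@ns_zero Y) = 0.
Proof. now rewrite <- (ns_scal0 ns_zero), ns_normZ, Rabs_R0, Rmult_0_l. Qed.

Lemma norm_opp (x : Y) : ns_norm (ns_scal (-1) x) = ns_norm x.
Proof. rewrite ns_normZ, Rabs_left by lra. ring. Qed.

Lemma norm_nonneg (x : Y) : 0 <= ns_norm x.
Proof.
  pose proof (ns_normD _ x (ns_scal (-1) x)) as H.
  rewrite (vaddNr ns_vector_space x : ns_add x (ns_scal (-1) x) = ns_zero), norm_zero, norm_opp in H.
  lra.
Qed.

Lemma norm_pos (x : Y) : x <> ns_zero -> 0 < ns_norm x.
Proof.
  intros Hx. destruct (norm_nonneg x) as [H|H]; auto. now destruct Hx; apply ns_norm_eq0.
Qed.

Lemma ns_scal_neq0 a (x : Y) : a <> 0 -> x <> ns_zero -> ns_scal a x <> ns_zero.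
Proof.
  intros Ha Hx H. apply (f_equal ns_norm) in H. rewrite ns_normZ, norm_zero in H.
  pose proof (Rabs_pos_lt a Ha). pose proof (norm_pos x Hx). nra.
Qed.

Lemma ns_scal_inj a b (x : Y) : x <> ns_zero -> ns_scal a x = ns_scal b x -> a = b.
Proof.
  intros Hx H. destruct (Req_dec (a - b) 0) as [Hab|Hab]; [lra|].
  exfalso. apply (ns_scal_neq0 _ _ Hab Hx).
  unfold Rminus. rewrite ns_scalDs, H, <- ns_scalDs, Rplus_opp_r.
  apply ns_scal0.
Qed.

End NormedSpaceFacts.

Section Operators.
Variables X Y : NormedSpace.

Definition operator_space : VectorSpace.
Proof.
  refine (MkVectorSpace (X -> Y) (op_zero X Y) (op_add X Y) (op_scal X Y) _ _ _ _ _ _ _ _);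
  intros; apply functional_extensionality; intro; unfold op_add, op_scal, op_zero.
  - apply ns_addA.
  - apply ns_addC.
  - apply ns_add0.
  - apply ns_scal0.
  - apply ns_scalA.
  - apply ns_scal1.
  - apply ns_scalDv.
  - apply ns_scalDs.
Defined.

Lemma linear_zero T : bounded_linear X Y T -> T ns_zero = ns_zero.
Proof. intros [_ [Hscal _]]. now rewrite <- (ns_scal0 X ns_zero), Hscal, ns_scal0. Qed.

Lemma bounded_linear_zero : bounded_linear X Y (op_zero X Y).
Proof.
  unfold op_zero. split; [|split].
  - intros. symmetry. apply ns_add0.
  - intros. symmetry. apply ns_scal_zero.
  - exists 0. intros. rewrite norm_zero. lra.
Qed.

Lemma bounded_linear_add A B : bounded_linear X Y A -> bounded_linear X Y B ->
  bounded_linear X Y (op_add X Y A B).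
Proof.
  intros [Aadd [Ascal [MA HA]]] [Badd [Bscal [MB HB]]]. unfold op_add. split; [|split].
  - intros. rewrite Aadd, Badd. apply (vaddACA (ns_vector_space Y)).
  - intros. rewrite Ascal, Bscal. symmetry. apply ns_scalDv.
  - exists (MA + MB). intros x. eapply Rle_trans; [apply ns_normD|].
    specialize (HA x). specialize (HB x). lra.
Qed.

Lemma bounded_linear_scal c A : bounded_linear X Y A -> bounded_linear X Y (op_scal X Y c A).
Proof.
  intros [Aadd [Ascal [MA HA]]]. unfold op_scal. split; [|split].
  - intros. rewrite Aadd. apply ns_scalDv.
  - intros. rewrite Ascal, !ns_scalA. f_equal. ring.
  - exists (Rabs c * MA). intros x. rewrite ns_normZ, Rmult_assoc.
    apply Rmult_le_compat_l; auto. apply Rabs_pos.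
Qed.

Lemma opnorm_is_lub T : bounded_linear X Y T ->
  is_lub (fun r => exists x : X, ns_norm x <= 1 /\ r = ns_norm (T x)) (opnorm X Y T).
Proof.
  intros HT. unfold opnorm. destruct (excluded_middle_informative _) as [H|H].
  { now destruct (constructive_indefinite_description _ H). }
  destruct H. destruct HT as [_ [_ [M HM]]].
  destruct (completeness (fun r => exists x : X, ns_norm x <= 1 /\ r = ns_norm (T x))) as [m Hm].
  - exists (Rabs M). intros r [x [Hx ->]]. eapply Rle_trans; [apply HM|].
    pose proof (norm_nonneg X x). pose proof (Rle_abs M). pose proof (Rabs_pos M). nra.
  - exists (ns_norm (T ns_zero)), ns_zero. rewrite norm_zero. split; [lra|auto].
  - now exists m.
Qed.

Lemma opnorm_le T c : bounded_linear X Y T ->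
  (forall x, ns_norm x <= 1 -> ns_norm (T x) <= c) -> opnorm X Y T <= c.
Proof. intros HT H. apply (opnorm_is_lub T HT). intros r [x [Hx ->]]. auto. Qed.

Lemma opnorm_nonneg T : bounded_linear X Y T -> 0 <= opnorm X Y T.
Proof.
  intros HT. apply (opnorm_is_lub T HT). exists ns_zero.
  rewrite linear_zero, !norm_zero by auto. split; [lra|auto].
Qed.

Lemma opnorm_bound T x : bounded_linear X Y T -> ns_norm (T x) <= opnorm X Y T * ns_norm x.
Proof.
  intros HT. destruct (classic (x = ns_zero)) as [->|Hx].
  - rewrite linear_zero, !norm_zero by auto. lra.
  - pose proof (norm_pos X x Hx) as Hn.
    assert (Hinv : 0 < / ns_norm x) by now apply Rinv_0_lt_compat.
    assert (H : ns_norm (T (ns_scal (/ ns_norm x) x)) <= opnorm X Y T).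
    { apply (opnorm_is_lub T HT). exists (ns_scal (/ ns_norm x) x). split; auto.
      rewrite ns_normZ, Rabs_pos_eq, Rinv_l; lra. }
    destruct HT as [_ [Hscal _]].
    rewrite Hscal, ns_normZ, Rabs_pos_eq in H by lra.
    apply (Rmult_le_compat_l (ns_norm x)) in H; [|lra].
    rewrite <- Rmult_assoc, Rinv_r, Rmult_1_l in H; lra.
Qed.

Lemma opnorm_unit_bound T x : bounded_linear X Y T -> ns_norm x = 1 ->
  ns_norm (T x) <= opnorm X Y T.
Proof. intros HT Hx. pose proof (opnorm_bound T x HT). now rewrite Hx, Rmult_1_r in H. Qed.

Lemma opnorm_approx T eps : bounded_linear X Y T -> 0 < eps ->
  exists x, ns_norm x <= 1 /\ opnorm X Y T - eps < ns_norm (T x).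
Proof.
  intros HT He. apply NNPP. intros H.
  enough (opnorm X Y T <= opnorm X Y T - eps) by lra.
  apply opnorm_le; auto. intros x Hx. apply Rnot_lt_le. intros H'. apply H. eauto.
Qed.

Lemma opnorm_pos T : bounded_linear X Y T -> T <> op_zero X Y -> 0 < opnorm X Y T.
Proof.
  intros HT HT0.
  assert (exists x, T x <> ns_zero) as [x Hx].
  { apply NNPP. intros H. apply HT0. apply functional_extensionality. intros x.
    apply NNPP. intros H'. apply H. eauto. }
  assert (x <> ns_zero) by (intros ->; now apply Hx, linear_zero).
  pose proof (norm_pos _ _ Hx). pose proof (norm_pos _ _ H). pose proof (opnorm_bound T x HT).
  pose proof (opnorm_nonneg T HT). nra.
Qed.

Lemma opnorm_zero : opnorm X Y (op_zero X Y) = 0.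
Proof.
  apply Rle_antisym; [|apply opnorm_nonneg, bounded_linear_zero].
  apply opnorm_le; [apply bounded_linear_zero|]. intros. unfold op_zero. rewrite norm_zero. lra.
Qed.

Lemma opnorm_add A B : bounded_linear X Y A -> bounded_linear X Y B ->
  opnorm X Y (op_add X Y A B) <= opnorm X Y A + opnorm X Y B.
Proof.
  intros HA HB. apply opnorm_le; [now apply bounded_linear_add|]. intros x Hx. unfold op_add.
  eapply Rle_trans; [apply ns_normD|].
  pose proof (opnorm_bound A x HA). pose proof (opnorm_bound B x HB).
  pose proof (opnorm_nonneg A HA). pose proof (opnorm_nonneg B HB). nra.
Qed.

Lemma opnorm_scal c A : bounded_linear X Y A ->
  opnorm X Y (op_scal X Y c A) = Rabs c * opnorm X Y A.
Proof.
  intros HA. pose proof (bounded_linear_scal c A HA) as HcA.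
  assert (Hle : forall c A, bounded_linear X Y A -> opnorm X Y (op_scal X Y c A) <= Rabs c * opnorm X Y A).
  { intros c' A' HA'. apply opnorm_le; [now apply bounded_linear_scal|]. intros x Hx.
    unfold op_scal. rewrite ns_normZ. apply Rmult_le_compat_l; [apply Rabs_pos|].
    pose proof (opnorm_bound A' x HA'). pose proof (opnorm_nonneg A' HA'). nra. }
  apply Rle_antisym; auto.
  destruct (Req_dec c 0) as [->|Hc].
  - rewrite Rabs_R0, Rmult_0_l. now apply opnorm_nonneg.
  - assert (HA' : opnorm X Y A = opnorm X Y (op_scal X Y (/ c) (op_scal X Y c A))).
    { f_equal. apply functional_extensionality. intros x. unfold op_scal.
      now rewrite ns_scalA, Rinv_l, ns_scal1. }
    rewrite HA'. pose proof (Hle (/ c) _ HcA). rewrite Rabs_inv in H.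
    pose proof (Rabs_pos_lt c Hc).
    apply (Rmult_le_compat_l (Rabs c)) in H; [|lra].
    now rewrite <- Rmult_assoc, Rinv_r, Rmult_1_l in H by lra.
Qed.

Lemma opnorm_sublinear : sublinear operator_space (bounded_linear X Y) (opnorm X Y).
Proof.
  split; [|split].
  - intros u v Hu Hv. now apply opnorm_add.
  - intros c u Hc Hu. simpl. rewrite opnorm_scal, Rabs_pos_eq by (auto; lra). reflexivity.
  - apply opnorm_zero.
Qed.

End Operators.

(** * Real sequences *)

Lemma Rabs_le_between a b : Rabs a <= b -> - b <= a <= b.
Proof. intros H. pose proof (Rle_abs a). pose proof (Rle_abs (- a)). rewrite Rabs_Ropp in *. lra. Qed.

Definition increasing_index (phi : nat -> nat) : Prop := forall n, (phi n < phi (S n))%nat.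

Lemma increasing_index_mono phi : increasing_index phi ->
  forall n m, (n <= m)%nat -> (phi n <= phi m)%nat.
Proof. intros Hphi n m Hnm. induction Hnm; [lia|]. specialize (Hphi m). lia. Qed.

Lemma increasing_index_ge phi : increasing_index phi -> forall n, (n <= phi n)%nat.
Proof. intros Hphi n. induction n; [lia|]. specialize (Hphi n). lia. Qed.

Lemma increasing_index_comp phi psi : increasing_index phi -> increasing_index psi ->
  increasing_index (fun n => phi (psi n)).
Proof.
  intros Hphi Hpsi n. specialize (Hpsi n).
  pose proof (increasing_index_mono phi Hphi (S (psi n)) (psi (S n)) Hpsi). specialize (Hphi (psi n)). lia.
Qed.

Lemma Un_cv_subseq u l phi : increasing_index phi -> Un_cv u l -> Un_cv (fun n => u (phi n)) l.
Proof.
  intros Hphi Hu eps He. destruct (Hu eps He) as [N HN]. exists N. intros n Hn.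
  apply HN. pose proof (increasing_index_ge phi Hphi n). lia.
Qed.

Lemma Un_cv_const c : Un_cv (fun _ => c) c.
Proof. intros eps He. exists O. intros. unfold Rdist. now rewrite Rminus_diag, Rabs_R0. Qed.

Lemma subseq_limit_comp u phi L : increasing_index phi ->
  subseq_limit (fun n => u (phi n)) L -> subseq_limit u L.
Proof.
  intros Hphi [psi [Hpsi Hcv]]. exists (fun n => phi (psi n)).
  split; auto. now apply increasing_index_comp.
Qed.

Lemma bounded_subseq_limit u M : (forall n, Rabs (u n) <= M) -> exists L, subseq_limit u L.
Proof.
  intros HM.
  destruct (Bolzano_Weierstrass u (fun c => - M <= c <= M) (compact_P3 _ _)) as [l Hl].
  { intros n. specialize (HM n). now apply Rabs_le_between. }
  assert (Hclose : forall N k : nat, exists p, (N <= p)%nat /\ Rabs (u p - l) < / INR (S k)).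
  { intros N k. assert (Hk : 0 < / INR (S k)) by (apply Rinv_0_lt_compat, lt_0_INR; lia).
    destruct (Hl (fun x => Rabs (x - l) < / INR (S k)) N) as [p [Hp Hp']].
    - exists (mkposreal _ Hk). now intros y Hy.
    - eauto. }
  destruct (choice (fun Nk p => (fst Nk <= p)%nat /\ Rabs (u p - l) < / INR (S (snd Nk))))
    as [g Hg]; [intros [N k]; apply Hclose|].
  set (phi := fix phi n := match n with O => g (O, O) | S m => g (S (phi m), S m) end).
  assert (Hphi : forall n, Rabs (u (phi n) - l) < / INR (S n)) by (intros []; apply Hg).
  exists l, phi. split.
  - intros n. apply (Hg (S (phi n), S n)).
  - intros eps He. destruct (archimed_cor1 eps He) as [N [HN HN0]]. exists N. intros n Hn.
    eapply Rlt_trans; [apply Hphi|]. eapply Rle_lt_trans; [|exact HN].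
    apply Rinv_le_contravar; [now apply lt_0_INR|]. apply le_INR. lia.
Qed.

Definition bounded_seq (u : nat -> R) : Prop := exists M, forall n, Rabs (u n) <= M.

Definition eventual_upper_bound (u : nat -> R) (c : R) : Prop :=
  exists N, forall n, (N <= n)%nat -> u n <= c.

Definition limsup (u : nat -> R) : R := Rinf (eventual_upper_bound u).

Lemma limsup_has_inf u : bounded_seq u -> has_inf (eventual_upper_bound u).
Proof.
  intros [M HM]. split.
  - exists M, O. intros n _. specialize (HM n). apply Rabs_le_between in HM. lra.
  - exists (- M). intros c [N HN]. specialize (HN N (le_n N)). specialize (HM N).
    apply Rabs_le_between in HM. lra.
Qed.

Lemma limsup_le u M : (forall n, Rabs (u n) <= M) -> limsup u <= M.
Proof.
  intros HM. apply Rinf_lb; [apply limsup_has_inf; now exists M|].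
  exists O. intros n _. specialize (HM n). apply Rabs_le_between in HM. lra.
Qed.

Lemma limsup_cv u l : bounded_seq u -> Un_cv u l -> limsup u = l.
Proof.
  intros Hu Hcv. apply Rle_antisym.
  - apply Rnot_lt_le. intros H.
    destruct (Hcv ((limsup u - l) / 2)) as [N HN]; [lra|].
    enough (limsup u <= (limsup u + l) / 2) by lra.
    apply Rinf_lb; [now apply limsup_has_inf|]. exists N. intros n Hn.
    specialize (HN n Hn). unfold Rdist in HN. apply Rabs_def2 in HN. lra.
  - apply Rinf_glb; [now apply limsup_has_inf|]. intros c [N HN].
    apply Rnot_lt_le. intros H. destruct (Hcv (l - c)) as [N' HN']; [lra|].
    specialize (HN (max N N') ltac:(lia)). specialize (HN' (max N N') ltac:(lia)).
    unfold Rdist in HN'. apply Rabs_def2 in HN'. lra.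
Qed.

Lemma limsup_add u v : bounded_seq u -> bounded_seq v ->
  limsup (fun n => u n + v n) <= limsup u + limsup v.
Proof.
  intros Hu Hv. apply Rinf_add_ge; try now apply limsup_has_inf.
  intros x y [N1 H1] [N2 H2]. apply Rinf_lb.
  - apply limsup_has_inf. destruct Hu as [Mu Hu], Hv as [Mv Hv]. exists (Mu + Mv). intros n.
    eapply Rle_trans; [apply Rabs_triang|]. specialize (Hu n). specialize (Hv n). lra.
  - exists (max N1 N2). intros n Hn. specialize (H1 n ltac:(lia)). specialize (H2 n ltac:(lia)). lra.
Qed.

Lemma limsup_scal c u : 0 < c -> bounded_seq u -> limsup (fun n => c * u n) = c * limsup u.
Proof.
  intros Hc Hu. apply Rinf_scal; auto; [now apply limsup_has_inf|..].
  - intros x [N HN]. exists N. intros n Hn. apply Rmult_le_compat_l; auto; lra.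
  - intros y [N HN]. exists N. intros n Hn. specialize (HN n Hn).
    apply (Rmult_le_reg_l c); auto. rewrite Rmult_div_assoc, Rmult_div_r; lra.
Qed.

(** * Semi-inner products *)

Section SemiInnerProduct.
Variable Y : NormedSpace.
Variable s : Y -> Y -> R.
Hypothesis Hs : compatible_sip Y s.

Lemma sip_zero_l z : s ns_zero z = 0.
Proof.
  destruct Hs as [Hlin _]. pose proof (Hlin 1 ns_zero ns_zero z) as H.
  rewrite ns_scal1, ns_add0 in H. lra.
Qed.

Lemma sip_add_l u v z : s (ns_add u v) z = s u z + s v z.
Proof. destruct Hs as [Hlin _]. rewrite <- (ns_scal1 _ u), Hlin, ns_scal1. ring. Qed.

Lemma sip_scal_l c u z : s (ns_scal c u) z = c * s u z.
Proof. destruct Hs as [Hlin _]. now rewrite <- (ns_add0 _ (ns_scal c u)), Hlin, sip_zero_l, Rplus_0_r. Qed.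

Lemma sip_bound u v : Rabs (s u v) <= ns_norm u * ns_norm v.
Proof.
  destruct Hs as [_ [_ [Hcs [_ Hnorm]]]]. specialize (Hcs u v). rewrite !Hnorm, <- pow2_abs in Hcs.
  pose proof (Rabs_pos (s u v)). pose proof (norm_nonneg _ u). pose proof (norm_nonneg _ v).
  assert (0 <= ns_norm u * ns_norm v) by nra. nra.
Qed.

End SemiInnerProduct.

Section SipExistence.
Variable Y : NormedSpace.

Let everywhere (y : ns_vector_space Y) : Prop := True.

Definition norming_functional (u : Y) (f : Y -> R) : Prop :=
  linear_on (ns_vector_space Y) everywhere f /\ (forall z, f z <= ns_norm z) /\ f u = ns_norm u.

Lemma norming_functional_exists u : exists f, norming_functional u f.
Proof.
  assert (Hnorm : sublinear (ns_vector_space Y) everywhere (@ns_norm Y)).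
  { split; [|split].
    - intros v w _ _. apply ns_normD.
    - intros c v Hc _. simpl. rewrite ns_normZ, Rabs_pos_eq; lra.
    - apply norm_zero. }
  destruct (hahn_banach (ns_vector_space Y) everywhere I (fun _ _ _ _ => I) (fun _ _ _ => I)
              _ u Hnorm I) as [f [Hf [Hle Hu]]].
  exists f. split; [exact Hf|split; auto]. intros z. now apply Hle.
Qed.

Definition nfun (u : Y) : Y -> R := epsilon (inhabits (fun _ => 0)) (norming_functional u).

Lemma nfun_spec u : norming_functional u (nfun u).
Proof. unfold nfun. apply epsilon_spec, norming_functional_exists. Qed.

Lemma nfun_add u x y : nfun u (ns_add x y) = nfun u x + nfun u y.
Proof. now apply (proj1 (proj1 (nfun_spec u))). Qed.

Lemma nfun_scal u a z : nfun u (ns_scal a z) = a * nfun u z.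
Proof. now apply (proj2 (proj1 (nfun_spec u))). Qed.

Lemma nfun_abs u z : Rabs (nfun u z) <= ns_norm z.
Proof.
  destruct (nfun_spec u) as [_ [Hle _]]. pose proof (Hle z). pose proof (Hle (ns_scal (-1) z)).
  rewrite nfun_scal, norm_opp in H0. apply Rabs_le. lra.
Qed.

(* A point of the line through [y] depending only on the line, so that the
   semi-inner product below is homogeneous also for negative scalars. *)
Definition line_rep (y : Y) : Y :=
  epsilon (inhabits ns_zero) (fun u => exists c, c <> 0 /\ u = ns_scal c y).

Definition line_coord (y : Y) : R := epsilon (inhabits 0) (fun k => y = ns_scal k (line_rep y)).

Lemma line_rep_spec y : exists c, c <> 0 /\ line_rep y = ns_scal c y.
Proof. apply (epsilon_spec (inhabits ns_zero) (fun u => exists c, c <> 0 /\ u = ns_scal c y)).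
  exists y, 1. split; [lra|]. now rewrite ns_scal1. Qed.

Lemma line_coord_spec y : y = ns_scal (line_coord y) (line_rep y).
Proof.
  apply (epsilon_spec (inhabits 0) (fun k => y = ns_scal k (line_rep y))).
  destruct (line_rep_spec y) as [c [Hc ->]]. exists (/ c). now rewrite ns_scalA, Rinv_l, ns_scal1.
Qed.

Lemma line_rep_scal a y : a <> 0 -> line_rep (ns_scal a y) = line_rep y.
Proof.
  intros Ha. unfold line_rep. f_equal. apply functional_extensionality. intros u.
  apply propositional_extensionality. split.
  - intros [c [Hc ->]]. exists (c * a). split; [now apply Rmult_integral_contrapositive|].
    apply ns_scalA.
  - intros [c [Hc ->]]. exists (c / a). split.
    + unfold Rdiv. apply Rmult_integral_contrapositive. split; auto. now apply Rinv_neq_0_compat.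
    + rewrite ns_scalA. f_equal. field. auto.
Qed.

(* The Lumer-Giles construction [[x, y] = ||y|| F_y(x)] with [F_y] a norming
   functional at [y], chosen coherently along each line. *)
Definition lumer_sip (x y : Y) : R := line_coord y * ns_norm (line_rep y) * nfun (line_rep y) x.

Lemma lumer_sip_self x : lumer_sip x x = ns_norm x ^ 2.
Proof.
  unfold lumer_sip. pose proof (line_coord_spec x) as Hx.
  set (r := line_rep x) in *. set (k := line_coord x) in *.
  rewrite Hx at 1 2. rewrite nfun_scal, ns_normZ, (proj2 (proj2 (nfun_spec r))).
  rewrite (Rmult_comm (Rabs k)), Rpow_mult_distr, pow2_abs. ring.
Qed.

Lemma lumer_sip_bound x y : Rabs (lumer_sip x y) <= ns_norm x * ns_norm y.
Proof.
  unfold lumer_sip. pose proof (f_equal ns_norm (line_coord_spec y)) as Hy.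
  rewrite ns_normZ in Hy. rewrite Hy, !Rabs_mult.
  rewrite (Rabs_pos_eq (ns_norm (line_rep y))) by apply norm_nonneg.
  pose proof (nfun_abs (line_rep y) x). pose proof (Rabs_pos (line_coord y)).
  pose proof (norm_nonneg _ (line_rep y)). pose proof (Rabs_pos (nfun (line_rep y) x)).
  assert (0 <= Rabs (line_coord y) * ns_norm (line_rep y)) by nra. nra.
Qed.

Lemma lumer_sip_scal_r a x y : lumer_sip x (ns_scal a y) = a * lumer_sip x y.
Proof.
  unfold lumer_sip. destruct (Req_dec a 0) as [->|Ha].
  - rewrite ns_scal0. destruct (line_rep_spec ns_zero) as [c [_ ->]].
    rewrite ns_scal_zero, norm_zero. ring.
  - rewrite line_rep_scal by auto.
    destruct (classic (line_rep y = ns_zero)) as [H0|H0].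
    { rewrite H0, norm_zero. ring. }
    enough (line_coord (ns_scal a y) = a * line_coord y) as -> by ring.
    apply (ns_scal_inj _ _ _ _ H0).
    rewrite <- ns_scalA, <- line_coord_spec, <- (line_rep_scal a y Ha). symmetry. apply line_coord_spec.
Qed.

Lemma lumer_sip_compatible : compatible_sip Y lumer_sip.
Proof.
  split; [|split; [|split; [|split]]].
  - intros a x y z. unfold lumer_sip. rewrite nfun_add, nfun_scal. ring.
  - intros x Hx. rewrite lumer_sip_self. pose proof (norm_pos _ _ Hx). nra.
  - intros x y. rewrite !lumer_sip_self, <- pow2_abs.
    pose proof (lumer_sip_bound x y). pose proof (Rabs_pos (lumer_sip x y)).
    pose proof (norm_nonneg _ x). pose proof (norm_nonneg _ y). nra.
  - intros a x y. apply lumer_sip_scal_r.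
  - apply lumer_sip_self.
Qed.

End SipExistence.

Lemma compatible_sip_exists (Y : NormedSpace) : exists s, compatible_sip Y s.
Proof. exists (lumer_sip Y). apply lumer_sip_compatible. Qed.

(** * Smoothness and orthogonality *)

Section OperatorAtT.
Variables X Y : NormedSpace.
Variable T : X -> Y.
Hypothesis hT : bounded_linear X Y T.

Lemma opnorm_unit_approx eps : 0 < eps <= opnorm X Y T ->
  exists y, ns_norm y = 1 /\ opnorm X Y T - eps < ns_norm (T y).
Proof.
  intros Heps. destruct (opnorm_approx X Y T eps hT (proj1 Heps)) as [x [Hx HTx]].
  assert (Hx0 : x <> ns_zero) by (intros ->; rewrite linear_zero, norm_zero in HTx; auto; lra).
  pose proof (norm_pos _ _ Hx0) as Hnx.
  assert (Hinv : 1 <= / ns_norm x) by (rewrite <- Rinv_1; apply Rinv_le_contravar; lra).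
  exists (ns_scal (/ ns_norm x) x). destruct hT as [_ [Hscal _]].
  rewrite Hscal, !ns_normZ, Rabs_pos_eq, Rinv_l by lra. split; [reflexivity|].
  pose proof (norm_nonneg _ (T x)). nra.
Qed.

Lemma norming_sequence_exists : T <> op_zero X Y -> exists xs, norming_sequence X Y T xs.
Proof.
  intros HT0. pose proof (opnorm_pos X Y T hT HT0) as Hm. set (m := opnorm X Y T) in *.
  assert (Heps : forall n, 0 < m / INR (S n) <= m).
  { intros n. pose proof (lt_0_INR (S n) ltac:(lia)). pose proof (le_INR 1 (S n) ltac:(lia)).
    rewrite INR_1 in H0. split; [now apply Rdiv_lt_0_compat|].
    unfold Rdiv. rewrite <- (Rmult_1_r m) at 2. apply Rmult_le_compat_l; [lra|].
    rewrite <- Rinv_1. apply Rinv_le_contravar; lra. }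
  destruct (choice (fun n y => ns_norm y = 1 /\ m - m / INR (S n) < ns_norm (T y))) as [xs Hxs].
  { intros n. now apply opnorm_unit_approx. }
  exists xs. split; [apply Hxs|].
  intros eps He. destruct (archimed_cor1 (eps / m)) as [N [HN HN0]]; [now apply Rdiv_lt_0_compat|].
  exists N. intros n Hn. destruct (Hxs n) as [H1 H2].
  pose proof (opnorm_unit_bound X Y T (xs n) hT H1). fold m in H.
  unfold Rdist. fold m. rewrite Rabs_left1 by lra.
  enough (m / INR (S n) < eps) by lra.
  apply (Rmult_lt_compat_l m) in HN; [|lra]. unfold Rdiv in *.
  replace (m * (eps * / m)) with eps in HN by (field; lra).
  eapply Rle_lt_trans; [|exact HN]. apply Rmult_le_compat_l; [lra|].
  apply Rinv_le_contravar; [now apply lt_0_INR|]. apply le_INR. lia.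
Qed.

Lemma norming_sequence_subseq xs phi : norming_sequence X Y T xs -> increasing_index phi ->
  norming_sequence X Y T (fun n => xs (phi n)).
Proof.
  intros [Hunit Hcv] Hphi. split; [auto|].
  now apply (Un_cv_subseq (fun n => ns_norm (T (xs n)))).
Qed.

Lemma sip_opnorm_bound s B x : compatible_sip Y s -> bounded_linear X Y B -> ns_norm x = 1 ->
  Rabs (s (B x) (T x)) <= opnorm X Y B * opnorm X Y T.
Proof.
  intros Hs HB Hx. eapply Rle_trans; [apply (sip_bound Y s Hs)|].
  apply Rmult_le_compat; try apply norm_nonneg; now apply opnorm_unit_bound.
Qed.

Lemma support_functional_of_dominated f :
  linear_on (operator_space X Y) (bounded_linear X Y) f ->
  (forall B, bounded_linear X Y B -> f B <= opnorm X Y B) -> f T = opnorm X Y T ->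
  support_functional X Y T f.
Proof.
  intros [Hadd Hscal] Hle HfT. split; [|split; [|split]]; auto.
  intros B HB. pose proof (Hle B HB). pose proof (Hle _ (bounded_linear_scal X Y (-1) B HB)).
  pose proof (Hscal (-1) B HB) as E. simpl in E. rewrite E, opnorm_scal, Rabs_left in H0 by (auto; lra).
  apply Rabs_le. lra.
Qed.

Lemma support_functional_exists : exists f, support_functional X Y T f.
Proof.
  destruct (hahn_banach (operator_space X Y) (bounded_linear X Y) (bounded_linear_zero X Y)
              (bounded_linear_add X Y) (bounded_linear_scal X Y) _ T (opnorm_sublinear X Y) hT)
    as [f [Hf [Hle HfT]]].
  exists f. now apply support_functional_of_dominated.
Qed.

Lemma BJ_orth_of_support_functional f A : bounded_linear X Y A ->
  support_functional X Y T f -> f A = 0 -> BJ_orth X Y T A.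
Proof.
  intros HA [Hadd [Hscal [Hbound HfT]]] HfA l.
  pose proof (bounded_linear_scal X Y l A HA) as HlA.
  pose proof (Hbound _ (bounded_linear_add X Y T _ hT HlA)) as H.
  rewrite Hadd, Hscal, HfA, HfT, Rmult_0_r, Rplus_0_r in H by auto.
  eapply Rle_trans; [apply Rle_abs|exact H].
Qed.

(* James: the support functional is obtained by Hahn-Banach from the distance
   [B |-> inf_l ||B + l A||] to the line through [A]. *)
Lemma support_functional_of_BJ_orth A : bounded_linear X Y A -> BJ_orth X Y T A ->
  exists f, support_functional X Y T f /\ f A = 0.
Proof.
  intros HA HBJ.
  set (V := operator_space X Y). set (D := bounded_linear X Y).
  assert (Hc : - opnorm X Y (op_scal X Y (-1) A) <= 0 <= opnorm X Y A).
  { pose proof (opnorm_nonneg X Y _ (bounded_linear_scal X Y (-1) A HA)).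
    pose proof (opnorm_nonneg X Y A HA). lra. }
  pose proof (shift_sublinear V D (bounded_linear_zero X Y) (bounded_linear_add X Y)
                (bounded_linear_scal X Y) _ A 0 (opnorm_sublinear X Y) HA Hc) as Hdist.
  pose proof (shift_le_self V D (bounded_linear_add X Y)
                (bounded_linear_scal X Y) _ A 0 (opnorm_sublinear X Y) HA Hc) as Hdist_le.
  pose proof (shift_line_le V D (bounded_linear_add X Y)
                (bounded_linear_scal X Y) _ A 0 (opnorm_sublinear X Y) HA Hc) as Hdist_line.
  assert (HdistT : shift V (opnorm X Y) A 0 T = opnorm X Y T).
  { apply Rle_antisym; [now apply Hdist_le|].
    apply Rinf_glb.
    - apply (shift_has_inf V D (bounded_linear_add X Y)
               (bounded_linear_scal X Y) _ A 0 (opnorm_sublinear X Y) HA Hc T hT).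
    - intros r [t ->]. rewrite Rmult_0_r, Rminus_0_r. apply HBJ. }
  destruct (hahn_banach V D (bounded_linear_zero X Y) (bounded_linear_add X Y)
              (bounded_linear_scal X Y) _ T Hdist hT) as [f [Hf [Hle HfT]]].
  exists f. split.
  - apply support_functional_of_dominated; auto; [|now rewrite HfT].
    intros B HB. eapply Rle_trans; [now apply Hle|]. now apply Hdist_le.
  - pose proof (Hle A HA) as H1. pose proof (Hdist_line 1) as H2. rewrite vscal1 in H2.
    pose proof (Hle _ (bounded_linear_scal X Y (-1) A HA)) as H3. pose proof (Hdist_line (-1)) as H4.
    pose proof (proj2 Hf (-1) A HA) as E. simpl in E. rewrite E in H3.
    change (@vscal V (-1) A) with (op_scal X Y (-1) A) in H4. lra.
Qed.

Section NormingSip.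
Variable s : Y -> Y -> R.
Hypothesis Hs : compatible_sip Y s.
Variable xs : nat -> X.
Hypothesis Hxs : norming_sequence X Y T xs.

Lemma sip_seq_bounded B : bounded_linear X Y B -> bounded_seq (fun n => s (B (xs n)) (T (xs n))).
Proof.
  intros HB. exists (opnorm X Y B * opnorm X Y T). intros n.
  apply sip_opnorm_bound; auto. apply Hxs.
Qed.

Lemma sip_seq_cv_self : Un_cv (fun n => s (T (xs n)) (T (xs n))) (opnorm X Y T ^ 2).
Proof.
  apply (Un_cv_ext (fun n => ns_norm (T (xs n)) * ns_norm (T (xs n)))).
  - intros n. rewrite (proj2 (proj2 (proj2 (proj2 Hs)))). ring.
  - replace (opnorm X Y T ^ 2) with (opnorm X Y T * opnorm X Y T) by ring.
    apply CV_mult; apply Hxs.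
Qed.

Lemma limsup_sip_sublinear :
  sublinear (operator_space X Y) (bounded_linear X Y) (fun B => limsup (fun n => s (B (xs n)) (T (xs n)))).
Proof.
  split; [|split].
  - intros A B HA HB. simpl. unfold op_add.
    replace (fun n => s (ns_add (A (xs n)) (B (xs n))) (T (xs n)))
      with (fun n => s (A (xs n)) (T (xs n)) + s (B (xs n)) (T (xs n)))
      by (apply functional_extensionality; intros n; symmetry; apply (sip_add_l Y s Hs)).
    apply limsup_add; now apply sip_seq_bounded.
  - intros c B Hc HB. simpl. unfold op_scal.
    replace (fun n => s (ns_scal c (B (xs n))) (T (xs n)))
      with (fun n => c * s (B (xs n)) (T (xs n)))
      by (apply functional_extensionality; intros n; symmetry; apply (sip_scal_l Y s Hs)).
    apply limsup_scal; auto. now apply sip_seq_bounded.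
  - apply limsup_cv; [apply sip_seq_bounded, bounded_linear_zero|].
    apply (Un_cv_ext (fun _ => 0)); [intros n; symmetry; apply (sip_zero_l Y s Hs)|apply Un_cv_const].
Qed.

(* The functional [B |-> limsup [B x_n, T x_n] / ||T||] supports [T]. *)
Lemma support_functional_of_sip_limit A L : T <> op_zero X Y -> bounded_linear X Y A ->
  Un_cv (fun n => s (A (xs n)) (T (xs n))) L ->
  exists g, support_functional X Y T g /\ g A * opnorm X Y T = L.
Proof.
  intros HT0 HA HL. pose proof (opnorm_pos X Y T hT HT0) as Hm. set (m := opnorm X Y T) in *.
  set (P := fun B => limsup (fun n => s (B (xs n)) (T (xs n)))).
  destruct (hahn_banach (operator_space X Y) (bounded_linear X Y) (bounded_linear_zero X Y)
              (bounded_linear_add X Y) (bounded_linear_scal X Y) P A limsup_sip_sublinear HA)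
    as [f [[Hadd Hscal] [Hle HfA]]].
  simpl in Hadd, Hscal.
  assert (HPT : P T = m ^ 2) by (apply limsup_cv; [now apply sip_seq_bounded|apply sip_seq_cv_self]).
  assert (HPmT : P (op_scal X Y (-1) T) = - m ^ 2).
  { apply limsup_cv; [apply sip_seq_bounded, bounded_linear_scal, hT|].
    apply (Un_cv_ext (fun n => -1 * s (T (xs n)) (T (xs n)))).
    - intros n. symmetry. apply (sip_scal_l Y s Hs).
    - replace (- m ^ 2) with (-1 * m ^ 2) by ring. apply CV_mult; [apply Un_cv_const|apply sip_seq_cv_self]. }
  assert (HfT : f T = m ^ 2).
  { pose proof (Hle T hT). pose proof (Hle _ (bounded_linear_scal X Y (-1) T hT)).
    rewrite (Hscal (-1) T hT) in H0. fold P in H, H0. lra. }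
  exists (fun B => f B / m). split.
  - apply support_functional_of_dominated.
    + split; intros; simpl; [rewrite Hadd|rewrite Hscal]; auto; field; lra.
    + intros B HB. apply (Rmult_le_reg_r m); [lra|]. unfold Rdiv. rewrite Rmult_assoc, Rinv_l, Rmult_1_r by lra.
      eapply Rle_trans; [now apply Hle|]. apply limsup_le. intros n.
      apply sip_opnorm_bound; auto. apply Hxs.
    + fold m. rewrite HfT. field. lra.
  - rewrite HfA. unfold P. rewrite (limsup_cv _ L); [field; lra|now apply sip_seq_bounded|exact HL].
Qed.

End NormingSip.

Definition sip_limits_vanish (A : X -> Y) : Prop :=
  forall s : Y -> Y -> R, compatible_sip Y s ->
  forall xs : nat -> X, norming_sequence X Y T xs ->
  forall L : R, subseq_limit (fun n => s (A (xs n)) (T (xs n))) L -> L = 0.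

Lemma sip_limits_vanish_of_smooth A : T <> op_zero X Y -> smooth_point X Y T ->
  bounded_linear X Y A -> BJ_orth X Y T A -> sip_limits_vanish A.
Proof.
  intros HT0 [_ Huniq] HA HBJ s Hs xs Hxs L [phi [Hphi HL]].
  destruct (support_functional_of_BJ_orth A HA HBJ) as [f [Hf HfA]].
  destruct (support_functional_of_sip_limit s Hs _ (norming_sequence_subseq xs phi Hxs Hphi) A L HT0 HA HL)
    as [g [Hg HgA]].
  rewrite <- HgA, (Huniq g f Hg Hf A HA), HfA. ring.
Qed.

Lemma BJ_orth_of_sip_limits_vanish A : T <> op_zero X Y -> bounded_linear X Y A ->
  sip_limits_vanish A -> BJ_orth X Y T A.
Proof.
  intros HT0 HA Hvan l. pose proof (opnorm_pos X Y T hT HT0) as Hm. set (m := opnorm X Y T) in *.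
  destruct (compatible_sip_exists Y) as [s Hs].
  destruct (norming_sequence_exists HT0) as [xs Hxs].
  destruct (bounded_subseq_limit (fun n => s (A (xs n)) (T (xs n))) (opnorm X Y A * m)) as [L HL].
  { intros n. apply sip_opnorm_bound; auto. apply Hxs. }
  pose proof (Hvan s Hs xs Hxs L HL) as ->. destruct HL as [phi [Hphi HL]].
  set (C := op_add X Y T (op_scal X Y l A)).
  assert (HC : bounded_linear X Y C) by (apply bounded_linear_add, bounded_linear_scal; auto).
  assert (HTn : Un_cv (fun n => ns_norm (T (xs (phi n)))) m)
    by (apply (Un_cv_subseq (fun n => ns_norm (T (xs n)))); auto; apply Hxs).
  assert (Hineq : forall n, ns_norm (T (xs (phi n))) * ns_norm (T (xs (phi n)))
            + l * s (A (xs (phi n))) (T (xs (phi n))) <= opnorm X Y C * ns_norm (T (xs (phi n)))).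
  { intros n. set (x := xs (phi n)).
    replace (ns_norm (T x) * ns_norm (T x) + l * s (A x) (T x)) with (s (C x) (T x)).
    2:{ unfold C, op_add, op_scal. rewrite (sip_add_l Y s Hs), (sip_scal_l Y s Hs).
        rewrite (proj2 (proj2 (proj2 (proj2 Hs)))). ring. }
    eapply Rle_trans; [apply Rle_abs|]. eapply Rle_trans; [apply (sip_bound Y s Hs)|].
    apply Rmult_le_compat_r; [apply norm_nonneg|]. apply opnorm_unit_bound; auto. apply Hxs. }
  pose proof (Rle_cv_lim Hineq
    (CV_plus _ _ _ _ (CV_mult _ _ _ _ HTn HTn) (CV_mult _ _ _ _ (Un_cv_const l) HL))
    (CV_mult _ _ _ _ (Un_cv_const (opnorm X Y C)) HTn)).
  fold C. nra.
Qed.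

Lemma sip_limits_vanish_add A B : bounded_linear X Y A -> bounded_linear X Y B ->
  sip_limits_vanish A -> sip_limits_vanish B -> sip_limits_vanish (op_add X Y A B).
Proof.
  intros HA HB HvA HvB s Hs xs Hxs L [phi [Hphi HL]].
  (* Along a further subsequence the [A]-terms converge too, necessarily to 0. *)
  destruct (bounded_subseq_limit (fun n => s (A (xs (phi n))) (T (xs (phi n))))
              (opnorm X Y A * opnorm X Y T)) as [LA HLA].
  { intros n. apply sip_opnorm_bound; auto. apply Hxs. }
  pose proof (HvA s Hs xs Hxs LA (subseq_limit_comp _ phi LA Hphi HLA)) as ->.
  destruct HLA as [psi [Hpsi HLA]].
  enough (L - 0 = 0) by lra.
  apply (HvB s Hs xs Hxs). exists (fun n => phi (psi n)). split; [now apply increasing_index_comp|].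
  apply (Un_cv_ext (fun n => s (op_add X Y A B (xs (phi (psi n)))) (T (xs (phi (psi n))))
                             - s (A (xs (phi (psi n)))) (T (xs (phi (psi n)))))).
  - intros n. unfold op_add. rewrite (sip_add_l Y s Hs). ring.
  - apply CV_minus; auto. now apply (Un_cv_subseq (fun n => s (op_add X Y A B (xs (phi n))) (T (xs (phi n))))).
Qed.

Lemma not_BJ_orth_scal_self k : T <> op_zero X Y -> k <> 0 -> ~ BJ_orth X Y T (op_scal X Y k T).
Proof.
  intros HT0 Hk HBJ. pose proof (opnorm_pos X Y T hT HT0). specialize (HBJ (- / k)).
  replace (op_add X Y T (op_scal X Y (- / k) (op_scal X Y k T))) with (op_zero X Y) in HBJ.
  - rewrite opnorm_zero in HBJ. lra.
  - apply functional_extensionality. intros x. unfold op_add, op_scal, op_zero.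
    rewrite ns_scalA, <- (ns_scal1 _ (T x)) at 1. rewrite <- ns_scalDs.
    replace (1 + - / k * k) with 0 by (field; auto). symmetry. apply ns_scal0.
Qed.

(* If [f B <> g B], the operators [B - (f B / ||T||) T] and [(g B / ||T||) T - B]
   are orthogonal to [T] but their sum, a nonzero multiple of [T], is not. *)
Lemma smooth_point_of_BJ_orth_add : T <> op_zero X Y ->
  (forall A B, bounded_linear X Y A -> bounded_linear X Y B ->
     BJ_orth X Y T A -> BJ_orth X Y T B -> BJ_orth X Y T (op_add X Y A B)) ->
  smooth_point X Y T.
Proof.
  intros HT0 Hadd_orth. split; [apply support_functional_exists|].
  intros f g Hf Hg B HB. pose proof (opnorm_pos X Y T hT HT0) as Hm. set (m := opnorm X Y T) in *.
  apply NNPP. intros Hne.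
  set (C1 := op_add X Y B (op_scal X Y (- (f B / m)) T)).
  set (C2 := op_add X Y (op_scal X Y (-1) B) (op_scal X Y (g B / m) T)).
  assert (HC1 : bounded_linear X Y C1) by (apply bounded_linear_add, bounded_linear_scal; auto).
  assert (HC2 : bounded_linear X Y C2)
    by (apply bounded_linear_add; apply bounded_linear_scal; auto).
  destruct Hf as [Hfadd [Hfscal [Hfb HfT]]], Hg as [Hgadd [Hgscal [Hgb HgT]]].
  assert (HT1 : BJ_orth X Y T C1).
  { apply (BJ_orth_of_support_functional f); auto; [repeat split; auto|].
    unfold C1. rewrite Hfadd, Hfscal, HfT by (auto; apply bounded_linear_scal; auto).
    fold m. field. lra. }
  assert (HT2 : BJ_orth X Y T C2).
  { apply (BJ_orth_of_support_functional g); auto; [repeat split; auto|].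
    unfold C2. rewrite Hgadd, !Hgscal, HgT by (auto; apply bounded_linear_scal; auto).
    fold m. field. lra. }
  apply (not_BJ_orth_scal_self (- (f B / m) + g B / m) HT0).
  - intros Heq. apply Hne. apply (Rmult_eq_reg_r (/ m)); [|apply Rinv_neq_0_compat; lra].
    unfold Rdiv in Heq. lra.
  - replace (op_scal X Y (- (f B / m) + g B / m) T) with (op_add X Y C1 C2)
      by exact (vadd_combine (operator_space X Y) B T _ _).
    now apply Hadd_orth.
Qed.

End OperatorAtT.

Theorem theorem2p1 (X Y : NormedSpace) (T : X -> Y)
  (hT : bounded_linear X Y T) (hT0 : T <> op_zero X Y) :
  smooth_point X Y T <->
  (forall A : X -> Y, bounded_linear X Y A ->
     (BJ_orth X Y T A <->
      (forall s : Y -> Y -> R, compatible_sip Y s ->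
       forall xs : nat -> X, norming_sequence X Y T xs ->
       forall L : R, subseq_limit (fun n => s (A (xs n)) (T (xs n))) L ->
       L = 0))).
Proof.
  change (smooth_point X Y T <-> forall A, bounded_linear X Y A ->
            (BJ_orth X Y T A <-> sip_limits_vanish X Y T A)).
  split.
  - intros Hsmooth A HA. split.
    + now apply sip_limits_vanish_of_smooth.
    + now apply BJ_orth_of_sip_limits_vanish.
  - intros Hchar. apply smooth_point_of_BJ_orth_add; auto.
    intros A B HA HB HTA HTB. apply Hchar; [now apply bounded_linear_add|].
    apply sip_limits_vanish_add; auto; now apply Hchar.
Qed.
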